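(* Let $p$ be a $\mathbb Z_2$-homogeneous monic element of $\mathcal{A}_E$ such that the associative composition $(p,t_{ij})_w$ is defined for some $w\in X^*$, where $t_{ij}=[e_i,f_j]-\delta_{ij}h_i$. Then $(p,t_{ij})_w\equiv(p)\tilde\partial_j\bmod(\{p\}\cup W,w)$.
   Context: Let $k$ be a field with $\mathrm{char}(k)\ne2,3$. $\Omega=\{1,\dots,r\}$, $\tau\subseteq\Omega$, $A=(a_{ij})_{i,j\in\Omega}$ a generalized Cartan matrix (entries $a_{ii}\in\{0,2\}$ with $a_{ii}=0\Rightarrow i\in\tau$; $a_{ij}\in\mathbb Z_{\le0}$ for $j\neq i$ when $a_{ii}\ne0$; $a_{ij}=0\Rightarrow a_{ji}=0$; $a_{ii}=2$, $i\in\tau\Rightarrow a_{ij}\in2\mathbb Z$). $X=E\cup H\cup F$, $E=\{e_i\}$, $H=\{h_i\}$, $F=\{f_i\}$, with $\deg i=\bar1$ iff $i\in\tau$, $\deg e_i=\deg f_i=\deg i$, $\deg h_i=\bar0$; order $e_i\succ h_j\succ f_k$ and $e_i\succ e_j$, $h_i\succ h_j$, $f_i\succ f_j$ iff $i>j$. $\mathcal A_E\subset\mathcal A_X$ are free associative algebras, with superbracket $[x,y]=xy-(-1)^{|x||y|}yx$. $W$ is the set $\{[h_i,h_j]\,(i>j),\ [e_i,f_j]-\delta_{ij}h_i,\ [e_j,h_i]+a_{ij}e_j,\ [h_i,f_j]+a_{ij}f_j\}$. The differential substitution $\tilde\partial_j$ is the linear map on $\mathcal A_E$ (with values in $\mathcal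 A_X$, written on the right) determined by $(e_i)\tilde\partial_j=\delta_{ij}h_j$ and $(uv)\tilde\partial_j=u\,(v)\tilde\partial_j+(-1)^{(\deg j)(\deg v)}(u)\tilde\partial_j\,v$ for homogeneous $u,v\in\mathcal A_E$. Orders: $X^*$ associative words; $u<1$ for nonempty $u$, $xu'<yv'$ iff $x\prec y$ or ($x=y$, $u'<v'$); $u\ll v$ iff $l(u)<l(v)$ or ($l(u)=l(v)$, $u<v$); $\bar p$ is the $\ll$-largest word of $p$, monic means its coefficient is $1$. Associative compositions of monic $p,q$: if $\bar pa=b\bar q=w$, $l(\bar p)>l(b)$: $(p,q)_w=pa-bq$; if $\bar p=a\bar qb=w$: $(p,q)_w=p-aqb$. $f\equiv g\bmod(S,w)$ means $f-g=\sum\alpha_ia_is_ib_i$ with $\alpha_i\in k$, $a_i,b_i\in X^*$, $s_i\in S$, $a_i\bar s_ib_i\ll w$. *)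

From HB Require Import structures.
From mathcomp Require Import all_boot all_order all_algebra.
From mathcomp Require Import finmap monalg.
Set Implicit Arguments. Unset Strict Implicit. Unset Printing Implicit Defensive.
Import GRing.Theory.
Local Open Scope ring_scope.

(* Generators X = E ∪ H ∪ F, indexed by Ω = 'I_r (0-based). *)
Notation gen r := (('I_r + 'I_r) + 'I_r)%type.
Definition ge {r} (i : 'I_r) : gen r := inl (inl i).
Definition gh {r} (i : 'I_r) : gen r := inl (inr i).
Definition gf {r} (i : 'I_r) : gen r := inr i.

(* The free associative algebra A_X over k: linear combinations of words. *)
Notation FAlg k r := {malg k[fmonom (gen r)]}.

Section Defs.
Variables (k : fieldType) (r : nat) (tau : {set 'I_r}).

Local Notation X := (gen r).
Local Notation P := (FAlg k r).

Definition wp (w : seq X) : P := << FMonom w >>.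

Definition degx (x : X) : bool :=
  match x with inl (inl i) => i \in tau | inl (inr _) => false | inr i => i \in tau end.
Definition wdeg (w : seq X) : bool := foldr (fun x b => degx x (+) b) false w.

Definition homog (p : P) (b : bool) : Prop :=
  forall m : fmonom X, m \in msupp p -> wdeg (fmonom_val m) = b.

Definition sgn (b : bool) : k := if b then -1 else 1.

Definition sbr (x y : X) : P := wp [:: x; y] - sgn (degx x && degx y) *: wp [:: y; x].

Definition isE (x : X) : bool := if x is inl (inl _) then true else false.
Definition inAE (p : P) : Prop :=
  forall m : fmonom X, m \in msupp p -> all isE (fmonom_val m).

Definition rankx (x : X) : nat :=
  match x with inl (inl i) => (2 * r + i)%N | inl (inr i) => (r + i)%N | inr i => nat_of_ord i end.
Definition prec (x y : X) : bool := (rankx x < rankx y)%N.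

Fixpoint wlt (u v : seq X) : bool :=
  match u, v with
  | [::], _ => false
  | _ :: _, [::] => true
  | x :: u', y :: v' => prec x y || ((x == y) && wlt u' v')
  end.

Definition wllt (u v : seq X) : bool :=
  (size u < size v)%N || ((size u == size v) && wlt u v).

(* leading word p̄: the ≪-largest word occurring in p ([::] if p = 0) *)
Definition lw (p : P) : seq X :=
  foldr (fun (m : fmonom X) acc => if wllt acc (fmonom_val m) then fmonom_val m else acc)
        [::] (msupp p).

Definition monicw (p : P) : Prop := p@_(FMonom (lw p)) = 1.

Definition composition (p q : P) (w : seq X) (c : P) : Prop :=
  (exists a b : seq X, [/\ lw p ++ a = w, b ++ lw q = w,
                          (size b < size (lw p))%N & c = p * wp a - wp b * q])
  \/ (exists a b : seq X, [/\ lw p = a ++ lw q ++ b, w = lw p & c = p - wp a * q * wp b]).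

Definition congr_mod (S : P -> Prop) (w : seq X) (f g : P) : Prop :=
  exists l : seq (k * seq X * P * seq X),
    (forall t, t \in l -> S t.1.2 /\ wllt (t.1.1.2 ++ lw t.1.2 ++ t.2) w) /\
    f - g = \sum_(t <- l) t.1.1.1 *: (wp t.1.1.2 * t.1.2 * wp t.2).

Definition tij (i j : 'I_r) : P :=
  sbr (ge i) (gf j) - (if i == j then wp [:: gh i] else 0).

Definition inW (A : 'M[int]_r) (s : P) : Prop :=
  (exists i j : 'I_r, (j < i)%N /\ s = sbr (gh i) (gh j))
  \/ (exists i j : 'I_r, s = tij i j)
  \/ (exists i j : 'I_r, s = sbr (ge j) (gh i) + (A i j)%:~R *: wp [:: ge j])
  \/ (exists i j : 'I_r, s = sbr (gh i) (gf j) + (A i j)%:~R *: wp [:: gf j]).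

Definition gcm (A : 'M[int]_r) : Prop :=
  [/\ forall i, A i i = 0 \/ A i i = 2,
      forall i, A i i = 0 -> i \in tau,
      forall i j, A i i != 0 -> j != i -> A i j <= 0,
      forall i j, A i j = 0 -> A j i = 0
    & forall i j, A i i = 2 -> i \in tau -> (2 %| A i j)%Z].

(* D is the differential substitution ∂̃_j on A_E (values in A_X, written on the right) *)
Definition is_diff_subst (j : 'I_r) (D : P -> P) : Prop :=
  [/\ forall i : 'I_r, D (wp [:: ge i]) = if i == j then wp [:: gh j] else 0,
      forall u v, inAE u -> inAE v -> D (u + v) = D u + D v,
      forall (c : k) u, inAE u -> D (c *: u) = c *: D u
    & forall u v bu bv, inAE u -> inAE v -> homog u bu -> homog v bv ->
        D (u * v) = u * D v + sgn ((j \in tau) && bv) *: (D u * v)].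

End Defs.

(* For a word u of A_E let δ(u) = [u, f_j] - (u)∂̃_j.  The superbracket with f_j
   and ∂̃_j obey the same super-Leibniz rule, and δ(e_m) = t_mj, so
   δ(u e_m) = u t_mj ± δ(u) e_m: by induction δ(u) is a combination of the
   relations a t_mj b with a e_m b = u, whose leading words a e_m f_j b arise
   from u by inserting f_j after a letter.  The only composition of p with t_ij
   has p̄ = b e_i, w = p̄ f_j and (p, t_ij)_w = p f_j - b t_ij.  By linearity
   p f_j - (p)∂̃_j = ± f_j p + Σ_u p_u δ(u); the summand b t_ij of δ(p̄) cancels,
   and every remaining term lies below w because f_j is the smallest letter:
   f_j p̄ ≪ p̄ f_j, moving f_j left across a nonempty E-word decreases it, and
   words u ≪ p̄ stay below p̄ f_j after an insertion of f_j. *)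

From Pilot Require Import Defs.
From HB Require Import structures.
From mathcomp Require Import all_boot all_order all_algebra.
From mathcomp Require Import finmap monalg.
From mathcomp Require Import zify.
Import GRing.Theory.
Local Open Scope ring_scope.

Set Implicit Arguments.
Unset Strict Implicit.
Unset Printing Implicit Defensive.

Lemma cat_eq_rcons2 (T : eqType) (u a b : seq T) x y :
  u ++ a = b ++ [:: x; y] -> (size b < size u)%N -> y \notin u -> u = rcons b x /\ a = [:: y].
Proof.
move=> e lt_bu yNu; have := congr1 size e; rewrite !size_cat /= => sz.
case: a e sz => [|z [|z' a]] e /= sz.
- by rewrite cats0 in e; rewrite e mem_cat !inE eqxx !orbT in yNu.
- move/eqP: e; rewrite -[b ++ _]cat_rcons eqseq_cat ?size_rcons; last by lia.
  by case/andP=> /eqP-> /eqP[->].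
- lia.
Qed.

Section WordOrder.
Variable r : nat.
Local Notation X := (gen r).
Local Notation isE := (@isE r).
Implicit Types (x y z : X) (a b s t u v w : seq X).

Definition wlle u v := (u == v) || wllt u v.

Lemma rankx_inj : injective (@rankx r).
Proof.
move=> [[a|a]|a] [[b|b]|b] /= eab; have := ltn_ord a; have := ltn_ord b; try lia;
  by move=> _ _; rewrite (_ : a = b) //; apply/val_inj; move: eab => /=; lia.
Qed.

Lemma prec_total x y : x != y -> prec x y || prec y x.
Proof.
by rewrite /prec => /(contra_neq (@rankx_inj x y)); rewrite neq_ltn.
Qed.

Lemma wlt_irr u : wlt u u = false.
Proof. by elim: u => //= x u ->; rewrite /prec ltnn andbF. Qed.

Lemma wlt_trans v u w : wlt u v -> wlt v w -> wlt u w.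
Proof.
elim: u v w => [|x u IH] [|y v] [|z w] //=.
case/orP=> [pxy|/andP[/eqP-> ltuv]]; case/orP=> [pyz|/andP[/eqP<- ltvw]].
- by rewrite /prec (ltn_trans pxy pyz).
- by rewrite pxy.
- by rewrite pyz.
- by rewrite eqxx (IH _ _ ltuv ltvw) orbT.
Qed.

Lemma wlt_total u v : u != v -> wlt u v || wlt v u.
Proof.
elim: u v => [|x u IH] [|y v] //=; rewrite eqseq_cons negb_and.
have [<-|nxy] := eqVneq x y; first by rewrite /prec ltnn; apply: IH.
by have /orP[->|->] := prec_total nxy; rewrite ?orbT.
Qed.

Lemma wlt_cat u v s t : size u = size v ->
  wlt (u ++ s) (v ++ t) = wlt u v || (u == v) && wlt s t.
Proof.
elim: u v => [|x u IH] [|y v] //= [/IH->].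
by rewrite eqseq_cons; case: (prec x y) (x == y) => [] [] //=; case: (wlt u v).
Qed.

Lemma wllt_irr u : wllt u u = false.
Proof. by rewrite /wllt ltnn wlt_irr andbF. Qed.

Lemma wllt_trans v u w : wllt u v -> wllt v w -> wllt u w.
Proof.
rewrite /wllt => /orP[ltuv|/andP[/eqP-> ltuv]] /orP[ltvw|/andP[/eqP<- ltvw]].
- by rewrite (ltn_trans ltuv ltvw).
- by rewrite ltuv.
- by rewrite ltvw.
- by rewrite eqxx (wlt_trans ltuv ltvw) orbT.
Qed.

Lemma wllt_total u v : u != v -> wllt u v || wllt v u.
Proof.
rewrite /wllt => nuv; case: (ltngtP (size u) (size v)) => //= _.
exact: wlt_total.
Qed.

Lemma wlle_refl u : wlle u u.
Proof. by rewrite /wlle eqxx. Qed.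

Lemma wllt_wlle u v : wllt u v -> wlle u v.
Proof. by move=> ltuv; rewrite /wlle ltuv orbT. Qed.

Lemma wlle_wllt_trans v u w : wlle u v -> wllt v w -> wllt u w.
Proof. by case/orP=> [/eqP->|/wllt_trans]; apply. Qed.

Lemma wlle_anti u v : wlle u v -> wlle v u -> u = v.
Proof.
case/orP=> [/eqP//|ltuv] /orP[/eqP//|ltvu].
by have := wllt_trans ltuv ltvu; rewrite wllt_irr.
Qed.

Lemma wllNge u v : ~~ wllt u v -> wlle v u.
Proof.
rewrite /wlle eq_sym; have [//|nuv] := eqVneq u v.
by have /orP[->|] := wllt_total nuv.
Qed.

Lemma nil_wlle u : wlle [::] u.
Proof. by case: u. Qed.

Lemma wllt_catr u v s : wllt u v -> wllt (u ++ s) (v ++ s).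
Proof.
rewrite /wllt !size_cat ltn_add2r eqn_add2r.
case/orP=> [->//|/andP[/eqP euv ltuv]]; by rewrite euv eqxx wlt_cat // ltuv orbT.
Qed.

(* f-letters precede all E-letters in the order on X. *)
Lemma wllt_shift_f a (y : 'I_r) s : all isE s -> s != [::] ->
  wllt (a ++ gf y :: s) (a ++ s ++ [:: gf y]).
Proof.
case: s => [//|z s] /andP[Ez _] _.
rewrite /wllt !size_cat /= addn1 ltnn eqxx /= wlt_cat // eqxx wlt_irr /= /prec.
case: z Ez => [[z|z]|z] //= _; have := ltn_ord y; lia.
Qed.

Lemma wllt_insert_f a x b (y : 'I_r) v : all isE b -> wllt (a ++ x :: b) v ->
  wllt (a ++ x :: gf y :: b) (v ++ [:: gf y]).
Proof.
move=> Eb /(wllt_catr [:: gf y]); rewrite -catA /=.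
have [->//|nb] := eqVneq b [::]; apply: wllt_trans.
by have := wllt_shift_f (rcons a x) y Eb nb; rewrite !cat_rcons.
Qed.

End WordOrder.

Lemma malg_scalerAr (K : monomType) (R : comNzRingType) (c : R) (x y : {malg R[K]}) :
  x * (c *: y) = c *: (x * y).
Proof.
rewrite -!mul_malgC mulrA [RHS]mulrA; congr (_ * _).
rewrite mul_malgC {1}[x]monalgE mulr_suml [x in RHS]monalgE scaler_sumr.
apply: eq_bigr => m _.
rewrite malgM_def fgmulUU mulm1; apply/malgP => m'.
by rewrite mcoeffZ !mcoeffU mulrnAr mulrC.
Qed.

Lemma subr_swap (V : zmodType) (x y d t z z' : V) :
  x - y - d = t + z + z' -> x - t - d = y + (z + z').
Proof.
move=> e; have -> : z + z' = x - y - d - t.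
  by apply: (addrI t); rewrite addrA -e [RHS]addrC subrK.
by rewrite !addrA (addrC y) addrK addrAC.
Qed.

Section SuperBracket.
Variables (R : comNzRingType) (A : lalgType R).
Hypothesis scalerAr_A : forall (c : R) (x y : A), x * (c *: y) = c *: (x * y).
Implicit Types (s c : R) (x y f : A).

Definition sbracket s x f : A := x * f - s *: (f * x).

Lemma sbracketDZ s c x y f : sbracket s (c *: x + y) f = c *: sbracket s x f + sbracket s y f.
Proof.
rewrite /sbracket mulrDl mulrDr -scalerAl scalerAr_A scalerDr scalerA mulrC -scalerA.
by rewrite scalerBr opprD addrACA.
Qed.

Lemma sbracketM s1 s2 x y f :
  sbracket (s1 * s2) (x * y) f = x * sbracket s2 y f + s2 *: (sbracket s1 x f * y).
Proof.
rewrite /sbracket mulrBr mulrBl scalerAr_A -scalerAl scalerBr scalerA [s2 * s1]mulrC !mulrA.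
by rewrite addrA subrK.
Qed.

Lemma scaler_addrB c (a b d e : A) : c *: a + b - (c *: d + e) = c *: (a - d) + (b - e).
Proof. by rewrite scalerBr opprD addrACA. Qed.

Lemma mulr_scaler_addrB s (x y a b d e : A) :
  x * a + s *: (b * y) - (x * d + s *: (e * y)) = x * (a - d) + s *: ((b - e) * y).
Proof. by rewrite mulrBr mulrBl scalerBr opprD addrACA. Qed.

End SuperBracket.

Lemma sgn_addb (k : fieldType) a b : sgn k (a (+) b) = sgn k a * sgn k b.
Proof. by case: a b => [] []; rewrite /sgn ?mulN1r ?opprK ?mul1r. Qed.

Lemma wdeg_cat r (tau : {set 'I_r}) u v : wdeg tau (u ++ v) = wdeg tau u (+) wdeg tau v.
Proof. by elim: u => //= x u ->; rewrite addbA. Qed.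

Section FreeAlgebra.
Variables (k : fieldType) (r : nat) (tau : {set 'I_r}).
Local Notation X := (gen r).
Local Notation P := (FAlg k r).
Local Notation wp := (@wp k r).
Local Notation isE := (@isE r).
Implicit Types (p q : P) (u v : seq X).

Lemma wp_cat u v : wp (u ++ v) = wp u * wp v.
Proof.
rewrite /wp malgM_def fgmulUU mulr1; congr << _ >>.
by apply/val_inj; rewrite /= fmM.
Qed.

Lemma wp_nil : wp [::] = 1.
Proof. by rewrite /wp; congr << _ >>; apply/val_inj; rewrite /= fm1. Qed.

Lemma mcoeff_wp u m : (wp u)@_m = (FMonom u == m)%:R.
Proof. exact: mcoeffU1. Qed.

Lemma msupp_wp u : msupp (wp u) = [fset FMonom u]%fset.
Proof. exact: msuppU1. Qed.

Lemma malg_wpE p : p = \sum_(m <- msupp p) p@_m *: wp (fmonom_val m).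
Proof.
rewrite {1}[p]monalgE; apply: eq_bigr => m _.
by rewrite /Defs.wp fmK -mul_malgC malgM_def fgmulUU mulr1 mul1m.
Qed.

Lemma inAE_wp u : all isE u -> inAE (wp u).
Proof. by move=> Eu m; rewrite msupp_wp inE => /eqP ->. Qed.

Lemma homog_wp u : homog tau (wp u) (wdeg tau u).
Proof. by move=> m; rewrite msupp_wp inE => /eqP ->. Qed.

Lemma inAE_sum (I : eqType) (s : seq I) (F : I -> P) :
  (forall i, i \in s -> inAE (F i)) -> inAE (\sum_(i <- s) F i).
Proof.
elim: s => [|i s IH] EF m; first by rewrite big_nil msupp0.
rewrite big_cons => /(fsubsetP (msuppD_le _ _)); rewrite inE => /orP[].
- by apply: EF; rewrite mem_head.
- by apply: IH => i' si'; apply: EF; rewrite inE si' orbT.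
Qed.

Lemma inAE_scale (c : k) p : inAE p -> inAE (c *: p).
Proof. by move=> Ep m /(fsubsetP (msuppZ_le c p)); exact: Ep. Qed.

Lemma lw_ub p m : m \in msupp p -> wlle (fmonom_val m) (lw p).
Proof.
rewrite /lw => hm; have : m \in enum_fset (msupp p) := hm; clear hm.
elim: (enum_fset (msupp p)) => //= m0 s IH.
rewrite inE => /orP[/eqP->|/IH lems]; case: ifPn => [lt0|/wllNge ge0] //.
- exact: wlle_refl.
- exact/wllt_wlle/(wlle_wllt_trans lems).
Qed.

Lemma lw_lub p u : (forall m, m \in msupp p -> wlle (fmonom_val m) u) -> wlle (lw p) u.
Proof.
rewrite /lw => ubp; have : forall m, m \in enum_fset (msupp p) -> wlle m u := ubp.
elim: (enum_fset (msupp p)) => [|m0 s IH] ub /=; first exact: nil_wlle.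
case: ifP => _; first by apply: ub; rewrite inE eqxx.
by apply: IH => m sm; apply: ub; rewrite inE sm orbT.
Qed.

Lemma lw_eq q u : FMonom u \in msupp q ->
  (forall m, m \in msupp q -> wlle (fmonom_val m) u) -> lw q = u.
Proof. by move=> /lw_ub /= uq /lw_lub lwq; apply: wlle_anti. Qed.

Lemma lw_tij i j : lw (tij k tau i j) = [:: ge i; gf j].
Proof.
have coef m : (tij k tau i j)@_m = (FMonom [:: ge i; gf j] == m)%:R
    - sgn k (degx tau (ge i) && degx tau (gf j)) * (FMonom [:: gf j; ge i] == m)%:R
    - (if i == j then (FMonom [:: gh i] == m)%:R else 0).
  rewrite /tij /sbr !mcoeffB mcoeffZ; congr (_ - _ * _ - _); try exact: mcoeff_wp.
  by case: (i == j); [exact: mcoeff_wp | exact: mcoeff0].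
apply: lw_eq => [|m]; rewrite -mcoeff_neq0 coef.
  have neq u : (FMonom u == FMonom [:: ge i; gf j]) = (u == [:: ge i; gf j]) by [].
  by rewrite eqxx !neq mulr0 subr0; case: (i == j); rewrite ?subr0 oner_eq0.
have [<-|_] := eqVneq (FMonom [:: ge i; gf j]) m; first by move=> _; exact: wlle_refl.
have [<-|_] := eqVneq (FMonom [:: gf j; ge i]) m.
  by move=> _; apply: wllt_wlle; rewrite /wllt /= /prec /=; have := ltn_ord j; lia.
have [<-|_] := eqVneq (FMonom [:: gh i]) m; first by move=> _; exact: wllt_wlle.
by case: (i == j); rewrite !mulr0n ?subrr ?subr0 mulr0 subrr eqxx.
Qed.

Lemma monic_lw_in_msupp p : monicw p -> FMonom (lw p) \in msupp p.
Proof. by rewrite /monicw -mcoeff_neq0 => ->; rewrite oner_eq0. Qed.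

Lemma composition_tij p i j w c : all isE (lw p) -> composition p (tij k tau i j) w c ->
  exists bb, [/\ lw p = rcons bb (ge i), w = lw p ++ [:: gf j]
                 & c = p * wp [:: gf j] - wp bb * tij k tau i j].
Proof.
move=> ELp; have fNLp : gf j \notin lw p by apply/negP => /(allP ELp).
case=> [[a [b [e1 e2 lt_b ->]]] | [a [b [e1 _ _]]]].
  rewrite lw_tij in e2; have [eLp ea] := cat_eq_rcons2 (etrans e1 (esym e2)) lt_b fNLp.
  by exists b; rewrite -e1 ea.
by move: fNLp; rewrite e1 lw_tij !mem_cat !inE eqxx !orbT.
Qed.

End FreeAlgebra.

Section CongrMod.
Variables (k : fieldType) (r : nat) (S : FAlg k r -> Prop) (w : seq (gen r)).
Local Notation P := (FAlg k r).
Implicit Types (f g : P).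

Lemma congr_mod_subr f g : congr_mod S w (f - g) 0 -> congr_mod S w f g.
Proof. by rewrite /congr_mod subr0. Qed.

Lemma congr_modD f g : congr_mod S w f 0 -> congr_mod S w g 0 -> congr_mod S w (f + g) 0.
Proof.
rewrite /congr_mod !subr0 => -[l1 [l1S ->]] [l2 [l2S ->]].
exists (l1 ++ l2); split; last by rewrite big_cat.
by move=> t; rewrite mem_cat => /orP[/l1S|/l2S].
Qed.

Lemma congr_modZ c f : congr_mod S w f 0 -> congr_mod S w (c *: f) 0.
Proof.
rewrite /congr_mod !subr0 => -[l [lS ->]].
exists [seq (c * t.1.1.1, t.1.1.2, t.1.2, t.2) | t <- l]; split.
  by move=> t /mapP[t' /lS t'S ->].
by rewrite big_map scaler_sumr; apply: eq_bigr => t _; rewrite scalerA.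
Qed.

Lemma congr_mod_sum (I : eqType) (s : seq I) (C : pred I) (F : I -> P) :
  (forall i, i \in s -> C i -> congr_mod S w (F i) 0) ->
  congr_mod S w (\sum_(i <- s | C i) F i) 0.
Proof.
move=> FS; rewrite big_seq_cond; apply: (big_ind (fun f => congr_mod S w f 0)) => //.
- by exists [::]; rewrite subr0 big_nil.
- exact: congr_modD.
- by move=> i /andP[]; exact: FS.
Qed.

Lemma congr_mod_term a s b : S s -> wllt (a ++ lw s ++ b) w ->
  congr_mod S w (wp k a * s * wp k b) 0.
Proof.
move=> Ss lt_w; exists [:: (1, a, s, b)]; rewrite subr0 big_seq1 scale1r.
by split=> // t; rewrite inE => /eqP->.
Qed.

End CongrMod.

Section DifferentialSubstitution.
Variables (k : fieldType) (r : nat) (tau : {set 'I_r}) (j : 'I_r) (D : FAlg k r -> FAlg k r).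
Hypothesis hD : is_diff_subst tau j D.
Local Notation X := (gen r).
Local Notation P := (FAlg k r).
Local Notation wp := (@wp k r).
Local Notation isE := (@isE r).
Local Notation sgn := (@sgn k).
Implicit Types (p q : P) (u v : seq X).

Let F := wp [:: gf j].
Let sgnf b := sgn (b && (j \in tau)).

Lemma D_wp_cat u v : all isE u -> all isE v ->
  D (wp (u ++ v)) = wp u * D (wp v) + sgnf (wdeg tau v) *: (D (wp u) * wp v).
Proof.
case: hD => _ _ _ DM Eu Ev; rewrite /sgnf andbC.
by rewrite wp_cat (DM _ _ _ _ (inAE_wp Eu) (inAE_wp Ev)
  (homog_wp tau (u := u)) (homog_wp tau (u := v))).
Qed.

Lemma D1 : D 1 = 0.
Proof.
have := D_wp_cat (u := [::]) (v := [::]) isT isT.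
by rewrite /sgnf /= wp_nil scale1r mul1r mulr1 -{1}[D 1]addr0 => /addrI.
Qed.

Lemma D_scaleD c p q : inAE p -> inAE q -> D (c *: p + q) = c *: D p + D q.
Proof.
case: hD => _ DD DZ _ Ep Eq.
have Ecp : inAE (c *: p) by apply: inAE_scale.
by rewrite (DD _ _ Ecp Eq) (DZ _ _ Ep).
Qed.

Lemma D0 : D 0 = 0.
Proof.
case: hD => _ _ DZ _; have := DZ 0 _ (inAE_wp (u := [::]) isT).
by rewrite scale0r [RHS]scale0r.
Qed.

Definition fdefect u : P := sbracket (sgnf (wdeg tau u)) (wp u) F - D (wp u).

Lemma tij_sbracket m :
  tij k tau m j = sbracket (sgnf (m \in tau)) (wp [:: ge m]) F - D (wp [:: ge m]).
Proof.
case: hD => DE _ _ _; rewrite /tij /sbr /sbracket DE.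
rewrite (wp_cat k [:: ge m] [:: gf j]) (wp_cat k [:: gf j] [:: ge m]).
by case: (eqVneq m j) => [->|].
Qed.

Lemma fdefect_nil : fdefect [::] = 0.
Proof. by rewrite /fdefect /sbracket /sgnf wp_nil D1 /= scale1r mul1r mulr1 !subrr. Qed.

Lemma fdefect_rcons u m : all isE u ->
  fdefect (rcons u (ge m)) = wp u * tij k tau m j + sgnf (m \in tau) *: (fdefect u * wp [:: ge m]).
Proof.
move=> Eu; rewrite /fdefect -cats1 (D_wp_cat (v := [:: ge m]) Eu isT) wdeg_cat /= addbF.
rewrite /sgnf andb_addl sgn_addb (wp_cat k u [:: ge m]) (sbracketM (@malg_scalerAr _ _)).
by rewrite mulr_scaler_addrB tij_sbracket.
Qed.

Lemma fdefect_congr (S : P -> Prop) w u s : (forall m, S (tij k tau m j)) -> all isE u ->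
  (forall a m b, u = a ++ ge m :: b -> wllt (a ++ ge m :: gf j :: b ++ s) w) ->
  congr_mod S w (fdefect u * wp s) 0.
Proof.
move=> Stij; elim/last_ind: u s => [|u x IH] s Eu ltw.
  by rewrite fdefect_nil mul0r; exists [::]; rewrite subr0 big_nil.
move: Eu; rewrite all_rcons; case: x ltw => [[m|m]|m] //= ltw Eu.
rewrite fdefect_rcons // mulrDl -scalerAl; apply: congr_modD.
  by apply: congr_mod_term => //; rewrite lw_tij; apply: (ltw u m [::]); rewrite cats1.
apply: congr_modZ; have := IH (ge m :: s) Eu.
rewrite (wp_cat k [:: ge m] s) mulrA; apply=> a m' b eu.
by have := ltw a m' (rcons b (ge m)); rewrite eu rcons_cat cat_rcons; apply.
Qed.

Lemma sbracket_sub_D_sum (I : eqType) (s : seq I) (c : I -> k) (g : I -> seq X) b :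
  (forall i, i \in s -> all isE (g i) /\ wdeg tau (g i) = b) ->
  sbracket (sgnf b) (\sum_(i <- s) c i *: wp (g i)) F - D (\sum_(i <- s) c i *: wp (g i)) =
  \sum_(i <- s) c i *: fdefect (g i).
Proof.
elim: s => [|i s IH] Eg.
  by rewrite [in LHS]big_nil [RHS]big_nil /sbracket mul0r mulr0 scaler0 subrr D0 subrr.
have [Egi degi] := Eg i (mem_head _ _).
have {}Eg i' : i' \in s -> all isE (g i') /\ wdeg tau (g i') = b.
  by move=> si'; apply: Eg; rewrite inE si' orbT.
have Esum : inAE (\sum_(i <- s) c i *: wp (g i)).
  by apply: inAE_sum => i' /Eg[Egi' _]; apply/inAE_scale/inAE_wp.
rewrite [in LHS]big_cons [RHS]big_cons (sbracketDZ (@malg_scalerAr _ _)).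
rewrite (D_scaleD _ (inAE_wp Egi) Esum).
by rewrite scaler_addrB -[in RHS](IH Eg) /fdefect degi.
Qed.

Lemma sbracket_sub_D_expand p b : inAE p -> homog tau p b ->
  sbracket (sgnf b) p F - D p = \sum_(m <- msupp p) p@_m *: fdefect (fmonom_val m).
Proof.
move=> Ep hp; rewrite {1 2}[p]malg_wpE.
by apply: sbracket_sub_D_sum => m pm; split; [exact: Ep | exact: hp].
Qed.

Section Reduction.
Variable S : P -> Prop.
Hypothesis S_tij : forall m, S (tij k tau m j).

Lemma fdefect_congr_lt v u : all isE u -> wllt u v -> congr_mod S (v ++ [:: gf j]) (fdefect u) 0.
Proof.
move=> Eu ltuv; rewrite -[fdefect u]mulr1 -(wp_nil k r).
apply: fdefect_congr => // a m b eu; rewrite cats0; apply: wllt_insert_f; last by rewrite -eu.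
by move: Eu; rewrite eu all_cat => /andP[_ /andP[]].
Qed.

Lemma fdefect_congr_rcons u i : all isE u ->
  congr_mod S (rcons u (ge i) ++ [:: gf j]) (fdefect u * wp [:: ge i]) 0.
Proof.
move=> Eu; apply: fdefect_congr => // a m b eu.
have Eb : all isE (rcons b (ge i)) by move: Eu; rewrite eu all_cat all_rcons => /and3P[].
have nb : rcons b (ge i) != [::] by case: (b).
have := wllt_shift_f (rcons a (ge m)) j Eb nb.
by rewrite !cat_rcons eu -catA cats1.
Qed.

Lemma composition_reduces p b bb i : S p -> inAE p -> homog tau p b -> monicw p ->
  lw p = rcons bb (ge i) ->
  congr_mod S (lw p ++ [:: gf j]) (p * F - wp bb * tij k tau i j - D p) 0.
Proof.
move=> Sp Ep hp mp eLp; have Lp := monic_lw_in_msupp mp.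
have ELp : all isE (lw p) := Ep _ Lp.
have Ebb : all isE bb by move: ELp; rewrite eLp all_rcons => /andP[].
have := sbracket_sub_D_expand Ep hp.
rewrite (bigD1_seq _ Lp (fset_uniq _)) mp scale1r eLp fdefect_rcons // => /subr_swap ->.
apply: congr_modD; [apply: congr_modZ | apply: congr_modD; first apply: congr_modZ].
- rewrite -[F * p]mulr1 -(wp_nil k r); apply: congr_mod_term => //.
  rewrite cats0 -eLp; apply: (wllt_shift_f [::]) => //.
  by rewrite eLp; case: (bb).
- exact: fdefect_congr_rcons.
- apply: congr_mod_sum => m pm nm; apply/congr_modZ/fdefect_congr_lt; first exact: Ep.
  rewrite -eLp in nm *; case/orP: (lw_ub pm) => // /eqP em.
  by move: nm; rewrite -em fmK eqxx.
Qed.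

End Reduction.

End DifferentialSubstitution.

Theorem lemma3p1 (k : fieldType) (r : nat) (tau : {set 'I_r}) (A : 'M[int]_r)
  (hk2 : 2 \notin [pchar k]%R) (hk3 : 3 \notin [pchar k])
  (hA : gcm tau A)
  (i j : 'I_r) (D : FAlg k r -> FAlg k r) (hD : is_diff_subst tau j D)
  (p : FAlg k r) (b : bool) (hpE : inAE p) (hph : homog tau p b) (hpm : monicw p)
  (w : seq (gen r)) (c : FAlg k r) :
  composition p (@tij k r tau i j) w c ->
  congr_mod (fun s => s = p \/ inW tau A s) w c (D p).
Proof.
(* Neither the characteristic of k nor the Cartan matrix plays a role here. *)
move=> /(composition_tij (hpE _ (monic_lw_in_msupp hpm))) [bb [eLp -> ->]].
apply/congr_mod_subr/(composition_reduces hD _ _ hpE hph hpm eLp); last by left.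
by move=> m; right; right; left; exists m, j.
Qed.
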